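(* Let $G$ be a reaction network with one-dimensional stoichiometric subspace. If for a total-constant vector $c^*\in\mathbb R^{s-1}$ the index set $\mathcal H$ is empty, then for any rate-constant vector $\kappa\in\mathbb R^m_{>0}$, $G$ has either no positive steady states or infinitely many positive steady states in $\mathcal P_{c^*}$.
   Context: A reaction network $G$ has species $X_1,\dots,X_s$ and $m$ reactions $\sum_{i}\alpha_{ij}X_i\to\sum_i\beta_{ij}X_i$, $\alpha_{ij},\beta_{ij}\in\mathbb Z_{\ge0}$, $(\alpha_{1j},\dots,\alpha_{sj})\neq(\beta_{1j},\dots,\beta_{sj})$. $\mathcal N$ has entries $\beta_{ij}-\alpha_{ij}$, $S=\mathrm{im}\,\mathcal N$. For $\kappa\in\mathbb R^m_{>0}$, $f(\kappa;x)=\mathcal N(\kappa_1\prod_i x_i^{\alpha_{i1}},\dots,\kappa_m\prod_i x_i^{\alpha_{im}})^\top$. Since $S$ is one-dimensional, species are labelled so that $\beta_{11}-\alpha_{11}\ne0$. For $c\in\mathbb R^{s-1}$, $\mathcal P_c=\{x\in\mathbb R^s_{\ge0}:(\beta_{i1}-\alpha_{i1})x_1-(\beta_{11}-\alpha_{11})x_i=c_{i-1},\ i=2,\dots,s\}$. A positive steady state is $x\in\mathbb R^s_{>0}$ with $f(\kappa;x)=0$. Notation for $c^*$: $A_1=1,B_1=0$, $A_i=\frac{\beta_{i1}-\alpha_{i1}}{\beta_{11}-\alpha_{11}}$, $B_i=-\frac{c^*_{i-1}}{\beta_{11}-\alpha_{11}}$ ($i\ge2$). $[i]=\{k:A_k\ne0,B_k/A_k=B_i/A_i\}$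 if $A_i\ne0$, $[i]=\{k:A_k=0\}$ otherwise; species labelled so that $1,\dots,r$ represent the $r$ distinct classes. $\varphi_k=\min_{1\le j\le m}\sum_{i\in[k]}\alpha_{ij}$, $\gamma_{kj}=\sum_{i\in[k]}\alpha_{ij}-\varphi_k$. $\mathcal J=\{i:A_i\neq0\}$, $\mathcal H=\{k\in\{1,\dots,r\}\cap\mathcal J:\gamma_{k1},\dots,\gamma_{km}\text{ are not all the same}\}$. *)

From HB Require Import structures.
From mathcomp Require Import all_boot all_order all_algebra.
Set Implicit Arguments. Unset Strict Implicit. Unset Printing Implicit Defensive.
Import Order.TTheory GRing.Theory Num.Theory.
Local Open Scope ring_scope.

(* Species are indexed by 'I_s.+1 (species "1" of the paper is ord0),
   reactions by 'I_m.+1 (reaction "1" of the paper is ord0).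
   alpha i j, beta i j : stoichiometric coefficients of species i in
   the reactant / product complex of reaction j. *)
Section Defs.
Variables (R : realFieldType) (s m : nat).
Variables (alpha beta : 'I_s.+1 -> 'I_m.+1 -> nat).

Definition stoich : 'M[R]_(s.+1, m.+1) :=
  \matrix_(i, j) ((beta i j)%:R - (alpha i j)%:R).

Definition ma_field (kappa : 'I_m.+1 -> R) (x : 'I_s.+1 -> R) (i : 'I_s.+1) : R :=
  \sum_(j < m.+1) stoich i j * (kappa j * \prod_(k < s.+1) x k ^+ alpha k j).

Definition positive_steady_state (kappa : 'I_m.+1 -> R) (x : 'I_s.+1 -> R) : Prop :=
  (forall i, 0 < x i) /\ (forall i, ma_field kappa x i = 0).

(* P_c, with c indexed by 'I_s: c i corresponds to species lift ord0 i *)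
Definition in_Pc (c : 'I_s -> R) (x : 'I_s.+1 -> R) : Prop :=
  (forall i, 0 <= x i) /\
  (forall i : 'I_s, stoich (lift ord0 i) ord0 * x ord0
                    - stoich ord0 ord0 * x (lift ord0 i) = c i).

Variable (c : 'I_s -> R).

Definition coefA (k : 'I_s.+1) : R :=
  if k == ord0 then 1 else stoich k ord0 / stoich ord0 ord0.

Definition coefB (k : 'I_s.+1) : R :=
  match unlift ord0 k with
  | None => 0
  | Some i => - (c i / stoich ord0 ord0)
  end.

Definition same_class (i k : 'I_s.+1) : bool :=
  if coefA i != 0 then (coefA k != 0) && (coefB k / coefA k == coefB i / coefA i)
  else coefA k == 0.

Definition class_sum (k : 'I_s.+1) (j : 'I_m.+1) : nat :=
  (\sum_(i < s.+1 | same_class k i) alpha i j)%N.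

Definition phi (k : 'I_s.+1) : nat :=
  \big[minn/class_sum k ord0]_(j < m.+1) class_sum k j.

Definition gamma (k : 'I_s.+1) (j : 'I_m.+1) : nat := (class_sum k j - phi k)%N.

(* class representatives: the least index in its class
   (the paper's labelling "1,...,r represent the r distinct classes") *)
Definition is_rep (k : 'I_s.+1) : bool :=
  [forall i : 'I_s.+1, same_class k i ==> (k <= i)%N].

Definition Hset : {set 'I_s.+1} :=
  [set k : 'I_s.+1 | [&& is_rep k, coefA k != 0 &
                      ~~ [forall j : 'I_m.+1, gamma k j == gamma k ord0]]].
End Defs.

From Pilot Require Import Defs.
From HB Require Import structures.
From mathcomp Require Import all_boot all_order all_algebra.
From mathcomp Require Import boolp classical_sets cardinality.
From mathcomp Require Import ring lra.
Set Implicit Arguments. Unset Strict Implicit. Unset Printing Implicit Defensive.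
Import Order.TTheory GRing.Theory Num.Theory.
Local Open Scope ring_scope.
Local Open Scope classical_set_scope.

(* On P_c* every point satisfies x_k = A_k x_1 + B_k, so moving a positive steady
   state x along this line gives x_k + A_k t = x_k (1 + t / (x_1 + B_k / A_k)):
   the scaling factor depends only on the class [k], and is 1 when A_k = 0.  The
   monomial of reaction j is therefore multiplied by the product over the classes
   of factor^(sum_{i in [k]} alpha_ij), and H = {} says that these class exponents
   do not depend on j.  Every monomial, hence f, is scaled by one common factor, so
   all the points of the line close to x are positive steady states. *)

Section SpeciesClasses.
Variables (R : realFieldType) (s m : nat).
Variables (alpha beta : 'I_s.+1 -> 'I_m.+1 -> nat) (c : 'I_s -> R).

Local Notation A := (coefA R alpha beta).
Local Notation same_class := (same_class alpha beta c).
Local Notation is_rep := (is_rep alpha beta c).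
Local Notation class_sum := (class_sum alpha beta c).

Lemma same_class_refl i : same_class i i.
Proof. by rewrite /same_class; case: ifPn => [->|/negbNE]; rewrite ?eqxx. Qed.

Lemma same_class_coefA i k : same_class i k -> (A i != 0) = (A k != 0).
Proof. by rewrite /same_class; case: ifPn => [_ /andP[->]|_ ->]. Qed.

Lemma same_class_sym i k : same_class i k -> same_class k i.
Proof.
move=> cik; move: (cik); rewrite /same_class -(same_class_coefA cik).
by case: ifPn => [-> /andP[_ /eqP ->]|/negbNE-> _]; rewrite ?eqxx.
Qed.

Lemma same_class_trans i k l : same_class i k -> same_class k l -> same_class i l.
Proof.
move=> cik; move: (cik); rewrite /same_class -(same_class_coefA cik).
by case: ifPn => // _ /andP[_ /eqP eki] /andP[-> /eqP ->]; rewrite eki eqxx.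
Qed.

Definition class_rep (i : 'I_s.+1) : 'I_s.+1 :=
  [arg min_(k < i | same_class i k) (k : nat)].

Lemma same_class_rep i : same_class i (class_rep i).
Proof. by rewrite /class_rep; case: arg_minnP => //; exact: same_class_refl. Qed.

Lemma class_rep_min i k : same_class i k -> (class_rep i <= k)%N.
Proof.
by rewrite /class_rep; case: arg_minnP => [|j _ min_j /min_j]//; exact: same_class_refl.
Qed.

Lemma is_rep_class_rep i : is_rep (class_rep i).
Proof.
apply/forallP => k; apply/implyP => crk.
exact/class_rep_min/(same_class_trans (same_class_rep i)).
Qed.

Lemma class_repP k' k : is_rep k' -> (class_rep k == k') = same_class k' k.
Proof.
move=> rep_k'; apply/eqP/idP => [<-|ck'k]; first exact/same_class_sym/same_class_rep.
apply/val_inj/eqP; rewrite eqn_leq class_rep_min; last exact: same_class_sym.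
move/forallP/(_ (class_rep k))/implyP: rep_k'; apply.
exact: same_class_trans ck'k (same_class_rep k).
Qed.

Lemma prod_expr_class_sum (g : 'I_s.+1 -> R) j :
  (forall k, A k = 0 -> g k = 1) ->
  (forall i k, A i != 0 -> same_class i k -> g k = g i) ->
  \prod_k g k ^+ alpha k j =
  \prod_(k | is_rep k && (A k != 0)) g k ^+ class_sum k j.
Proof.
move=> g_out g_class.
rewrite (bigID (fun k => A k != 0)) /= [X in _ * X]big1 ?mulr1; last first.
  by move=> k /negbNE/eqP/g_out ->; rewrite expr1n.
rewrite (partition_big class_rep (fun k => is_rep k && (A k != 0))) /=; last first.
  by move=> k Ak; rewrite is_rep_class_rep -(same_class_coefA (same_class_rep k)).
apply: eq_bigr => k' /andP[rep_k' Ak']; rewrite -prodrXr.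
have sameP k : (A k != 0) && (class_rep k == k') = same_class k' k.
  rewrite class_repP //; apply: andb_idl => ck'k.
  by rewrite -(same_class_coefA ck'k).
rewrite (eq_bigl _ _ sameP); apply: eq_bigr => k ck'k.
by rewrite (g_class _ _ Ak' ck'k).
Qed.

Hypothesis H_empty : Hset alpha beta c = finset.set0.

Lemma phi_le_class_sum k j : (phi alpha beta c k <= class_sum k j)%N.
Proof. by rewrite /phi -minEnat -leEnat; exact: bigmin_le. Qed.

Lemma class_sum_const k j :
  is_rep k -> A k != 0 -> class_sum k j = class_sum k ord0.
Proof.
move=> rep_k Ak.
have : k \notin Hset alpha beta c by rewrite H_empty finset.in_set0.
rewrite finset.inE rep_k Ak negbK => /forallP/(_ j)/eqP.
rewrite /gamma => /(congr1 (addn^~ (phi alpha beta c k))).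
by rewrite !subnK ?phi_le_class_sum.
Qed.

Lemma prod_expr_const (g : 'I_s.+1 -> R) j :
  (forall k, A k = 0 -> g k = 1) ->
  (forall i k, A i != 0 -> same_class i k -> g k = g i) ->
  \prod_k g k ^+ alpha k j = \prod_k g k ^+ alpha k ord0.
Proof.
move=> g_out g_class; rewrite !prod_expr_class_sum //.
by apply: eq_bigr => k /andP[rep_k Ak]; rewrite class_sum_const.
Qed.

End SpeciesClasses.

Lemma ma_field_rescale (R : realFieldType) s m (alpha beta : 'I_s.+1 -> 'I_m.+1 -> nat)
  (kappa : 'I_m.+1 -> R) (x g : 'I_s.+1 -> R) i :
  (forall j, \prod_k g k ^+ alpha k j = \prod_k g k ^+ alpha k ord0) ->
  ma_field alpha beta kappa (fun k => x k * g k) i =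
  \prod_k g k ^+ alpha k ord0 * ma_field alpha beta kappa x i.
Proof.
move=> g_const; rewrite /ma_field mulr_sumr; apply: eq_bigr => j _.
rewrite (eq_bigr _ (fun k _ => exprMn _ _ _)) big_split /=.
by rewrite g_const; ring.
Qed.

Section ConservationClass.
Variables (R : realFieldType) (s m : nat).
Variables (alpha beta : 'I_s.+1 -> 'I_m.+1 -> nat) (c : 'I_s -> R).
Hypothesis N11_neq0 : stoich R alpha beta ord0 ord0 != 0.

Local Notation A := (coefA R alpha beta).
Local Notation B := (Defs.coefB alpha beta c).
Local Notation in_Pc := (in_Pc alpha beta c).

Lemma coefA0 : A ord0 = 1.
Proof. by rewrite /coefA eqxx. Qed.

Lemma coefA_lift i :
  A (lift ord0 i) = stoich R alpha beta (lift ord0 i) ord0 / stoich R alpha beta ord0 ord0.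
Proof. by rewrite /coefA eq_sym (negbTE (neq_lift ord0 i)). Qed.

Lemma in_Pc_affine x k : in_Pc x -> x k = A k * x ord0 + B k.
Proof.
case=> _ x_cons; rewrite /Defs.coefB.
case: unliftP => [i ->|->]; last by rewrite coefA0 mul1r addr0.
by rewrite coefA_lift -(x_cons i); field.
Qed.

Lemma in_Pc_shift x t :
  in_Pc x -> (forall k, 0 <= x k + A k * t) -> in_Pc (fun k => x k + A k * t).
Proof.
case=> _ x_cons ge0; split=> // i.
by rewrite coefA0 coefA_lift -(x_cons i); field.
Qed.

Lemma coefA_div_same_class x i k : in_Pc x -> (forall k, x k != 0) ->
  A i != 0 -> same_class alpha beta c i k -> A k / x k = A i / x i.
Proof.
move=> x_Pc x_neq0 Ai cik; have Ak : A k != 0 by rewrite -(same_class_coefA cik).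
rewrite -[LHS]invf_div -[RHS]invf_div; congr _^-1.
have shift l : A l != 0 -> x l / A l = x ord0 + B l / A l.
  by move=> Al; rewrite (in_Pc_affine l x_Pc); field.
move: cik; rewrite /same_class Ai => /andP[_ /eqP eB].
by rewrite !shift // eB.
Qed.

End ConservationClass.

Lemma steady_state_shift (R : realFieldType) s m
  (alpha beta : 'I_s.+1 -> 'I_m.+1 -> nat) (c : 'I_s -> R) (kappa : 'I_m.+1 -> R) x t :
  stoich R alpha beta ord0 ord0 != 0 -> Hset alpha beta c = finset.set0 ->
  in_Pc alpha beta c x -> positive_steady_state alpha beta kappa x ->
  (forall k, 0 < x k + coefA R alpha beta k * t) ->
  let y := fun k => x k + coefA R alpha beta k * t in
  in_Pc alpha beta c y /\ positive_steady_state alpha beta kappa y.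
Proof.
move=> N11_neq0 H_empty x_Pc [x_gt0 x_ss] y_gt0 y.
have x_neq0 k : x k != 0 by rewrite gt_eqF.
split; first by apply: in_Pc_shift => // k; exact: ltW.
split=> // i; pose g k := 1 + coefA R alpha beta k / x k * t.
have yE : y = fun k => x k * g k by apply/funext => k; rewrite /y /g; field.
rewrite yE ma_field_rescale ?x_ss ?mulr0 //.
move=> j; apply: (prod_expr_const H_empty) => [k A0|l k Al clk].
  by rewrite /g A0 !mul0r addr0.
by rewrite /g (coefA_div_same_class N11_neq0 x_Pc x_neq0 Al clk).
Qed.

Lemma small_shift_gt0 (R : realFieldType) (I : finType) (x v : I -> R) :
  (forall k, 0 < x k) ->
  exists2 delta, 0 < delta & forall t k, 0 <= t <= delta -> 0 < x k + v k * t.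
Proof.
move=> x_gt0; pose S := \sum_k `|v k| / x k.
have S_ge0 : 0 <= S by apply: sumr_ge0 => k _; rewrite divr_ge0 // ltW.
exists (1 + S)^-1; first by rewrite invr_gt0; lra.
move=> t k /andP[t_ge0 t_le].
have vk_le : `|v k| / x k <= S.
  by rewrite /S (bigD1 k) //= lerDl sumr_ge0 // => l _; rewrite divr_ge0 // ltW.
have vk_ge : - v k <= `|v k| by rewrite -normrN ler_norm.
have xk := x_gt0 k.
have vkE : `|v k| = x k * (`|v k| / x k) by field; exact: lt0r_neq0.
have St : S * t < 1.
  apply: le_lt_trans (ler_wpM2l S_ge0 t_le) _.
  by rewrite -/(S / (1 + S)) ltr_pdivrMr; lra.
have h1 : 0 <= (v k + `|v k|) * t by rewrite mulr_ge0 //; lra.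
have h2 : `|v k| * t <= x k * S * t.
  by rewrite ler_wpM2r // vkE ler_wpM2l // ltW.
have h3 : 0 < x k * (1 - S * t) by rewrite mulr_gt0 // subr_gt0.
nra.
Qed.

Lemma infinite_set_inj (T : Type) (P : set T) (f : nat -> T) :
  injective f -> (forall n, P (f n)) -> infinite_set P.
Proof.
move=> f_inj Pf; apply/infiniteP.
have := @card_ge_preimage nat _ P f (fun a b _ _ => @f_inj a b).
suff -> : f @^-1` P = [set: nat] by [].
by apply/seteqP; split => n // _; exact: Pf.
Qed.

Theorem lemma5p10 (R : realFieldType) (s m : nat)
  (alpha beta : 'I_s.+1 -> 'I_m.+1 -> nat)
  (Hreact : forall j : 'I_m.+1, exists i : 'I_s.+1, alpha i j <> beta i j)
  (Hdim : \rank (stoich R alpha beta) = 1%N)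
  (H11 : stoich R alpha beta ord0 ord0 != 0)
  (cstar : 'I_s -> R)
  (HH : Hset alpha beta cstar = finset.set0)
  (kappa : 'I_m.+1 -> R) (Hkappa : forall j, 0 < kappa j) :
  let PSS := [set x : 'I_s.+1 -> R |
               in_Pc alpha beta cstar x /\ positive_steady_state alpha beta kappa x] in
  PSS = set0 \/ infinite_set PSS.
Proof.
move=> PSS; have [[x [x_Pc x_ss]]|no_pss] := pselect (exists x, PSS x); last first.
  by left; apply/seteqP; split=> x // PSSx; apply: no_pss; exists x.
right; have [delta delta_gt0 shift_gt0] := small_shift_gt0 (coefA R alpha beta) x_ss.1.
have t_in n : 0 <= delta / n.+1%:R <= delta.
  have delta_ge0 := ltW delta_gt0.
  by rewrite divr_ge0 //= ler_pdivrMr // ler_peMr // ler1n.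
apply: (@infinite_set_inj _ _ (fun n k => x k + coefA R alpha beta k * (delta / n.+1%:R))).
  move=> n1 n2 /(congr1 (fun y => y ord0)) /addrI.
  rewrite coefA0 !mul1r => /(mulfI (lt0r_neq0 delta_gt0)) /invr_inj /eqP.
  by rewrite eqr_nat => /eqP [].
by move=> n; apply: steady_state_shift => // k; exact: shift_gt0.
Qed.
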